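(* Let $\Gamma_1,\Gamma_2$ be first-order theories over $\mathcal L$. Then $\Gamma_1$ and $\Gamma_2$ are uniformly equivalent if and only if the set of QHT-interpretations of $\mathcal L$ that are there-closed in $C_s(\Gamma_1)$ equals the set of QHT-interpretations of $\mathcal L$ that are there-closed in $C_s(\Gamma_2)$.
   Context: A first-order signature $\mathcal L=\langle\mathcal F,\mathcal P\rangle$ consists of disjoint sets of function symbols $\mathcal F$ (0-ary ones are object constants) and predicate symbols $\mathcal P$, with arities. Formulas are built as in first-order logic with equality from atoms, equations $t_1=t_2$ and $\bot$ using $\wedge,\vee,\to,\forall,\exists$; $\neg\phi$ abbreviates $\phi\to\bot$; a theory is a set of sentences. For a nonempty universe $\mathcal U$ let $\mathcal C_{\mathcal U}=\{c_\varepsilon\mid\varepsilon\in\mathcal U\}$ be fresh distinct constants and $\mathrm{At}(\mathcal P,\mathcal U)$ the set of atoms $p(c_{\varepsilon_1},..,c_{\varepsilon_n})$, $p\in\mathcal P$. A QHT-interpretation of $\mathcal L$ is a triple $\langle I,J,K\rangle$ where $I$ interprets $\mathcal F$ on some universe $\mathcal U$ (with $I(c_\varepsilon)=\varepsilon$) and $J\subseteq K\subseteq\mathrm{At}(\mathcal P,\mathcal U)$; total if $J=K$. $\langle I,K\rangle$ is the classical interpretation with function part $I$ where exactly the atoms of $K$ are true. Satisfaction by $M=\langle I,J,K\rangle$: $M\models p(t_1,..,t_n)$ iff $p(c_{t_1^I},..,c_{t_n^I})\in J$; $M\models t_1=t_2$ iff $t_1^I=t_2^I$; $M\not\models\bot$;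 $\wedge,\vee$ componentwise; $M\models\phi\to\psi$ iff ($M\not\models\phi$ or $M\models\psi$) and $\langle I,K\rangle\models\phi\to\psi$ classically; $M\models\forall x\phi(x)$ iff $M\models\phi(c_\varepsilon)$ and $\langle I,K\rangle\models\phi(c_\varepsilon)$ for all $\varepsilon$; $M\models\exists x\phi(x)$ iff $M\models\phi(c_\varepsilon)$ for some $\varepsilon$. $\langle I,K\rangle$ is an answer set of $\Gamma$ iff $\langle I,K,K\rangle\models\Gamma$ and $\langle I,J,K\rangle\not\models\Gamma$ for every $J\subsetneq K$. A sentence is factual if built using only $\wedge,\vee,\exists,\forall$ and implications $\phi\to\bot$. $\Gamma_1,\Gamma_2$ over $\mathcal L$ are uniformly equivalent iff for every signature $\mathcal L'\supseteq\mathcal L$ and every factual theory $\Gamma$ over $\mathcal L'$, $\Gamma_1\cup\Gamma$ and $\Gamma_2\cup\Gamma$ have the same answer sets. $C_s(\Gamma)$ is the set of QHT-countermodels of $\Gamma$ (QHT-interpretations of $\mathcal L$ not satisfying $\Gamma$). $\langle I,J,K\rangle$ is there-closed in a set $S$ if $\langle I,K,K\rangle\notin S$ and $\langle I,J',K\rangle\in S$ for every $J\subseteq J'\subsetneq K$. *)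

From mathcomp Require Import all_boot.

Record sig := Sig {
  fsym : Type; psym : Type;
  farity : fsym -> nat; parity : psym -> nat }.

Set Implicit Arguments. Unset Strict Implicit. Unset Printing Implicit Defensive.

(* Extension L' = L + new symbols.  Every signature L' ⊇ L is (up to renaming)
   of this form. *)
Definition ext (L : sig) (EF EP : Type) (ea : EF -> nat) (ep : EP -> nat) : sig :=
  {| fsym := (fsym L + EF)%type; psym := (psym L + EP)%type;
     farity := fun s => match s with inl f => farity L f | inr e => ea e end;
     parity := fun s => match s with inl p => parity L p | inr e => ep e end |}.

Inductive term (L : sig) : Type :=
| Var : nat -> term L
| App : forall f : fsym L, ('I_(farity L f) -> term L) -> term L.

Inductive form (L : sig) : Type :=
| Atom : forall p : psym L, ('I_(parity L p) -> term L) -> form L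
| Eq : term L -> term L -> form L
| Bot : form L
| And : form L -> form L -> form L
| Or : form L -> form L -> form L
| Imp : form L -> form L -> form L
| All : nat -> form L -> form L
| Ex : nat -> form L -> form L.
Arguments Bot {L}.

Fixpoint term_vars_in (L : sig) (B : nat -> Prop) (t : term L) : Prop :=
  match t with
  | Var x => B x
  | App f ts => forall i, term_vars_in B (ts i)
  end.

Fixpoint form_vars_in (L : sig) (B : nat -> Prop) (phi : form L) : Prop :=
  match phi with
  | Atom p ts => forall i, term_vars_in B (ts i)
  | Eq t1 t2 => term_vars_in B t1 /\ term_vars_in B t2
  | Bot => True
  | And a b | Or a b | Imp a b => form_vars_in B a /\ form_vars_in B b
  | All x a | Ex x a => form_vars_in (fun y => y = x \/ B y) a
  end.

Definition sentence (L : sig) (phi : form L) : Prop := form_vars_in (fun _ => False) phi.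

Definition theory (L : sig) := form L -> Prop.
Definition is_theory (L : sig) (G : theory L) : Prop := forall phi, G phi -> sentence phi.

Fixpoint factual (L : sig) (phi : form L) : Prop :=
  match phi with
  | Atom _ _ | Eq _ _ | Bot => True
  | And a b | Or a b => factual a /\ factual b
  | Imp a Bot => factual a
  | Imp _ _ => False
  | All _ a | Ex _ a => factual a
  end.

Definition factual_theory (L : sig) (G : theory L) : Prop :=
  forall phi, G phi -> sentence phi /\ factual phi.

Fixpoint emb_term L EF EP ea ep (t : term L) : term (@ext L EF EP ea ep) :=
  match t with
  | Var x => Var _ x
  | App f ts => @App (ext L ea ep) (inl f) (fun i => emb_term ea ep (ts i))
  end.

Fixpoint emb_form L EF EP ea ep (phi : form L) : form (@ext L EF EP ea ep) :=
  match phi with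
  | Atom p ts => @Atom (ext L ea ep) (inl p) (fun i => emb_term ea ep (ts i))
  | Eq t1 t2 => Eq (emb_term ea ep t1) (emb_term ea ep t2)
  | Bot => Bot
  | And a b => And (emb_form ea ep a) (emb_form ea ep b)
  | Or a b => Or (emb_form ea ep a) (emb_form ea ep b)
  | Imp a b => Imp (emb_form ea ep a) (emb_form ea ep b)
  | All x a => All x (emb_form ea ep a)
  | Ex x a => Ex x (emb_form ea ep a)
  end.

Definition emb_theory L EF EP (ea : EF -> nat) (ep : EP -> nat) (G : theory L)
  : theory (ext L ea ep) := fun psi => exists phi, G phi /\ psi = emb_form ea ep phi.

Definition union_th L (A B : theory L) : theory L := fun phi => A phi \/ B phi.

(* Semantics.  U is the universe; I interprets function symbols on U;
   ground atoms p(c_e1,..,c_en) are pairs (p, (e1,..,en)). *)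
Definition finterp (L : sig) (U : Type) := forall f : fsym L, (farity L f).-tuple U -> U.
Definition atom (L : sig) (U : Type) := {p : psym L & (parity L p).-tuple U}.
Definition atoms (L : sig) (U : Type) := atom L U -> Prop.

Definition subset_at L U (A B : atoms L U) : Prop := forall a, A a -> B a.
Definition strict_subset_at L U (A B : atoms L U) : Prop :=
  subset_at A B /\ exists a, B a /\ ~ A a.

Definition upd (U : Type) (env : nat -> U) (x : nat) (e : U) : nat -> U :=
  fun y => if y == x then e else env y.

Fixpoint eval L U (I : finterp L U) (env : nat -> U) (t : term L) : U :=
  match t with
  | Var x => env x
  | App f ts => I f [tuple eval I env (ts i) | i < farity L f]
  end.

Definition ground_atom L U (I : finterp L U) (env : nat -> U) (p : psym L)
  (ts : 'I_(parity L p) -> term L) : atom L U :=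
  existT _ p [tuple eval I env (ts i) | i < parity L p].

Fixpoint csat L U (I : finterp L U) (K : atoms L U) (env : nat -> U) (phi : form L) : Prop :=
  match phi with
  | Atom p ts => K (ground_atom I env ts)
  | Eq t1 t2 => eval I env t1 = eval I env t2
  | Bot => False
  | And a b => csat I K env a /\ csat I K env b
  | Or a b => csat I K env a \/ csat I K env b
  | Imp a b => csat I K env a -> csat I K env b
  | All x a => forall e, csat I K (upd env x e) a
  | Ex x a => exists e, csat I K (upd env x e) a
  end.

Fixpoint hsat L U (I : finterp L U) (J K : atoms L U) (env : nat -> U) (phi : form L) : Prop :=
  match phi with
  | Atom p ts => J (ground_atom I env ts)
  | Eq t1 t2 => eval I env t1 = eval I env t2
  | Bot => False
  | And a b => hsat I J K env a /\ hsat I J K env b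
  | Or a b => hsat I J K env a \/ hsat I J K env b
  | Imp a b => (~ hsat I J K env a \/ hsat I J K env b) /\ csat I K env (Imp a b)
  | All x a => forall e, hsat I J K (upd env x e) a /\ csat I K (upd env x e) a
  | Ex x a => exists e, hsat I J K (upd env x e) a
  end.

(* <I,J,K> |= Gamma  (sentences: the environment is irrelevant) *)
Definition hsat_th L U (I : finterp L U) (J K : atoms L U) (G : theory L) : Prop :=
  forall phi, G phi -> forall env : nat -> U, hsat I J K env phi.

Definition answer_set L U (I : finterp L U) (K : atoms L U) (G : theory L) : Prop :=
  hsat_th I K K G /\ forall J, strict_subset_at J K -> ~ hsat_th I J K G.

Definition unif_equiv (L : sig) (G1 G2 : theory L) : Prop :=
  forall (EF EP : Type) (ea : EF -> nat) (ep : EP -> nat) (G : theory (ext L ea ep)),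
    factual_theory G ->
    forall (U : Type), inhabited U ->
    forall (I : finterp (ext L ea ep) U) (K : atoms (ext L ea ep) U),
      answer_set I K (union_th (@emb_theory L EF EP ea ep G1) G) <->
      answer_set I K (union_th (@emb_theory L EF EP ea ep G2) G).

Definition Cs L (G : theory L) U (I : finterp L U) (J K : atoms L U) : Prop :=
  subset_at J K /\ ~ hsat_th I J K G.

Definition there_closed L U
  (S : finterp L U -> atoms L U -> atoms L U -> Prop)
  (I : finterp L U) (J K : atoms L U) : Prop :=
  ~ S I K K /\ forall J', subset_at J J' -> strict_subset_at J' K -> S I J' K.

From mathcomp Require Import all_boot.
From Stdlib Require Import Classical FunctionalExtensionality PropExtensionality.
Set Implicit Arguments. Unset Strict Implicit.

(* Both directions go through the language extension L + C_U.
   (=>) A triple <I,J,K> with J ⊆ K is there-closed in C_s(Γ) exactly when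
   <I,K> is an answer set of Γ ∪ J, J read as a set of ground facts over the
   new constants; uniform equivalence then transfers this between Γ1 and Γ2.
   (<=) Let Γ be factual over L' ⊇ L.  An interpretation <I,K> of L' is an
   answer set of Γi ∪ Γ iff <I,K,K> ⊨ Γi ∪ Γ and every strictly smaller
   model J of Γ is strictly smaller already on L, with <I,J|L,K|L>
   there-closed in C_s(Γi): if Γi had a model J' between J|L and K|L, then
   J ∪ J' would model both Γi and, Γ being factual hence monotone in J, Γ. *)

Lemma subset_at_refl L U (A : atoms L U) : subset_at A A.
Proof. by []. Qed.

Lemma subset_at_trans L U (A B C : atoms L U) :
  subset_at A B -> subset_at B C -> subset_at A C.
Proof. by move=> sAB sBC a /sAB /sBC. Qed.

Lemma subset_at_antisym L U (A B : atoms L U) :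
  subset_at A B -> subset_at B A -> A = B.
Proof.
move=> sAB sBA; apply: functional_extensionality => a.
by apply: propositional_extensionality; split; [apply: sAB | apply: sBA].
Qed.

Lemma subset_atE L U (A B : atoms L U) :
  subset_at A B -> A = B \/ strict_subset_at A B.
Proof.
move=> sAB; case: (classic (exists a, B a /\ ~ A a)) => [ex | nex]; [by right | left].
by apply: subset_at_antisym => // a Ba; apply: NNPP => nAa; apply: nex; exists a.
Qed.

Lemma hsat_th_union L U (I : finterp L U) J K (A B : theory L) :
  hsat_th I J K (union_th A B) <-> hsat_th I J K A /\ hsat_th I J K B.
Proof.
split; first by move=> H; split=> phi Hphi; apply: H; [left | right].
by move=> [HA HB] phi [Hphi | Hphi]; [apply: HA | apply: HB].
Qed.

Lemma hsat_csat L U (I : finterp L U) J K phi env :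
  subset_at J K -> hsat I J K env phi -> csat I K env phi.
Proof.
move=> sJK; elim: phi env => [p ts|t1 t2| |a IHa b IHb|a IHa b IHb|a IHa b IHb|x a IHa|x a IHa] env /=.
- exact: sJK.
- by [].
- by [].
- by move=> [/IHa ? /IHb ?].
- by move=> [/IHa ? | /IHb ?]; [left | right].
- by case.
- by move=> H e; case: (H e).
- by move=> [e /IHa H]; exists e.
Qed.

Lemma factual_hsat_mono L U (I : finterp L U) J J' K phi env :
  subset_at J J' -> subset_at J' K -> factual phi ->
  hsat I J K env phi -> hsat I J' K env phi.
Proof.
move=> sJJ' sJ'K; elim: phi env => [p ts|t1 t2| |a IHa b IHb|a IHa b IHb|a IHa b IHb|x a IHa|x a IHa] env /=.
- by move=> _; apply: sJJ'.
- by [].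
- by [].
- by move=> [fa fb] [ha hb]; split; [apply: IHa | apply: IHb].
- by move=> [fa fb] [ha | hb]; [left; apply: IHa | right; apply: IHb].
- (* a factual implication is a negation, whose "here" part follows from its classical part *)
  case: b IHb => //= _ fa [_ na]; split => //.
  by left => /(hsat_csat sJ'K).
- by move=> fa H e; case: (H e) => h c; split => //; apply: IHa.
- by move=> fa [e h]; exists e; apply: IHa.
Qed.

Lemma there_closed_refl L (G : theory L) U (I : finterp L U) K :
  there_closed (Cs G (U:=U)) I K K <-> hsat_th I K K G.
Proof.
split=> [[nC _] | HK]; first by apply: NNPP => nK; apply: nC; split.
by split=> [[_ []] | J' sKJ' [_ [a [Ka nJ'a]]]] //; case: nJ'a; apply: sKJ'.
Qed.

Lemma there_closed_mono L U (S : finterp L U -> atoms L U -> atoms L U -> Prop)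
    I J J' K :
  subset_at J J' -> there_closed S I J K -> there_closed S I J' K.
Proof.
move=> sJJ' [nS tc]; split=> // J'' sJ'J'' st.
by apply: tc st; apply: subset_at_trans sJ'J''.
Qed.

Section Restriction.

Variables (L : sig) (EF EP : Type) (ea : EF -> nat) (ep : EP -> nat) (U : Type).
Local Notation L' := (ext L ea ep).

Definition resI (I : finterp L' U) : finterp L U := fun f => I (inl f).

Definition resA (A : atoms L' U) : atoms L U :=
  fun a => A (existT (fun s : psym L' => (parity L' s).-tuple U) (inl (projT1 a)) (projT2 a)).

Definition liftA (A : atoms L U) : atoms L' U :=
  fun a => match a with existT s t =>
    (match s return (parity L' s).-tuple U -> Prop with
     | inl p => fun t => A (existT _ p t) | inr _ => fun _ => False end) t end.

Lemma resA_liftA (A : atoms L U) : resA (liftA A) = A.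
Proof. by apply: functional_extensionality => -[p t]. Qed.

Lemma resA_subset (A B : atoms L' U) : subset_at A B -> subset_at (resA A) (resA B).
Proof. by move=> sAB a; apply: sAB. Qed.

Lemma liftA_subset (A : atoms L U) (B : atoms L' U) :
  subset_at A (resA B) -> subset_at (liftA A) B.
Proof. by move=> sAB [[p|e] t] //= h; apply: (sAB (existT _ p t)). Qed.

Lemma liftA_strict (A B : atoms L U) :
  strict_subset_at A B -> strict_subset_at (liftA A) (liftA B).
Proof.
move=> [sAB [[p t] nA]]; split; last by exists (existT _ (inl p) t).
by apply: liftA_subset; rewrite resA_liftA.
Qed.

Lemma strict_resA_liftA (A : atoms L' U) (B : atoms L U) :
  strict_subset_at A (liftA B) -> strict_subset_at (resA A) B.
Proof.
move=> [sAB [[[p|e] t] [] // Bt nAt]]; split; last by exists (existT _ p t).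
by move=> [p' t'] /(sAB (existT _ (inl p') t')).
Qed.

Lemma eval_emb (I : finterp L' U) env (t : term L) :
  eval I env (emb_term ea ep t) = eval (resI I) env t.
Proof.
elim: t => [x|f ts IH] //=; congr (I (inl f) _).
by apply: eq_from_tnth => i; rewrite !tnth_mktuple IH.
Qed.

Lemma ground_atom_emb (I : finterp L' U) (A : atoms L' U) env p ts :
  A (ground_atom I env (p := inl p) (fun i => emb_term ea ep (ts i)))
  <-> resA A (ground_atom (resI I) env ts).
Proof.
rewrite /resA /ground_atom /=.
have -> : [tuple eval I env (emb_term ea ep (ts i)) | i < parity L p]
        = [tuple eval (resI I) env (ts i) | i < parity L p].
  by apply: eq_from_tnth => i; rewrite !tnth_mktuple eval_emb.
by [].
Qed.

Lemma csat_emb (I : finterp L' U) K phi env :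
  csat I K env (emb_form ea ep phi) <-> csat (resI I) (resA K) env phi.
Proof.
elim: phi env => [p ts|t1 t2| |a IHa b IHb|a IHa b IHb|a IHa b IHb|x a IHa|x a IHa] env /=.
- exact: ground_atom_emb.
- by rewrite !eval_emb.
- by [].
- by rewrite IHa IHb.
- by rewrite IHa IHb.
- by rewrite IHa IHb.
- by split=> H e; apply/IHa.
- by split=> -[e H]; exists e; apply/IHa.
Qed.

Lemma hsat_emb (I : finterp L' U) J K phi env :
  hsat I J K env (emb_form ea ep phi) <-> hsat (resI I) (resA J) (resA K) env phi.
Proof.
elim: phi env => [p ts|t1 t2| |a IHa b IHb|a IHa b IHb|a IHa b IHb|x a IHa|x a IHa] env /=.
- exact: ground_atom_emb.
- by rewrite !eval_emb.
- by [].
- by rewrite IHa IHb.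
- by rewrite IHa IHb.
- by rewrite IHa IHb !csat_emb.
- by split=> H e; case: (H e) => h c; split; first [by apply/IHa | by apply/csat_emb].
- by split=> -[e H]; exists e; apply/IHa.
Qed.

Lemma hsat_th_emb (I : finterp L' U) J K (G : theory L) :
  hsat_th I J K (emb_theory G) <-> hsat_th (resI I) (resA J) (resA K) G.
Proof.
split=> H phi.
- by move=> Gphi env; apply/hsat_emb; apply: H; exists phi.
- by move=> [psi [Gpsi ->]] env; apply/hsat_emb; apply: H.
Qed.

Lemma answer_set_emb_union (G1 : theory L) (G : theory L') (I : finterp L' U) K :
  factual_theory G ->
  answer_set I K (union_th (emb_theory G1) G) <->
  [/\ hsat_th (resI I) (resA K) (resA K) G1, hsat_th I K K G &
      forall J, strict_subset_at J K -> hsat_th I J K G ->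
        strict_subset_at (resA J) (resA K) /\
        there_closed (Cs G1 (U:=U)) (resI I) (resA J) (resA K)].
Proof.
move=> fG; split=> [[/hsat_th_union [/hsat_th_emb HK1 HKG] Hmin] | [HK1 HKG Hsmall]].
  split=> // J stJK HJG.
  have not_G1 J' : strict_subset_at J' K -> hsat_th I J' K G ->
      ~ hsat_th (resI I) (resA J') (resA K) G1.
    move=> st HJ'G HJ'1; apply: (Hmin J' st).
    by apply/hsat_th_union; split => //; apply/hsat_th_emb.
  split.
    case: (subset_atE (resA_subset stJK.1)) => // eJK.
    by case: (not_G1 J stJK HJG); rewrite eJK.
  split; first by case=> _; apply.
  move=> J' sJJ' stJ'; split; first exact: stJ'.1.
  pose J2 : atoms L' U := fun a => J a \/ liftA J' a.
  have sJJ2 : subset_at J J2 by move=> a; left.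
  have sJ2K : subset_at J2 K.
    by move=> a [/stJK.1 // | /(liftA_subset stJ'.1) //].
  have resJ2 : resA J2 = J'.
    by apply: subset_at_antisym => [[p t] [/sJJ' | ] | [p t]] //; right.
  rewrite -resJ2; apply: not_G1.
    split => //; case: stJ'.2 => -[p t] [Ka nJ'a].
    by exists (existT _ (inl p) t); split => // -[/(sJJ' (existT _ p t)) | ].
  move=> phi Gphi env; apply: (factual_hsat_mono sJJ2 sJ2K (fG phi Gphi).2).
  exact: HJG.
split; first by apply/hsat_th_union; split => //; apply/hsat_th_emb.
move=> J stJK /hsat_th_union [/hsat_th_emb HJ1 HJG].
have [st [_ tc]] := Hsmall J stJK HJG.
by case: (tc (resA J) (@subset_at_refl _ _ _) st).
Qed.

End Restriction.

Section Constants.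

Variables (L : sig) (U : Type).

(* L + C_U: one new constant c_e for each e in U, and no new predicate *)
Definition EL : sig := @ext L U False (fun _ => 0) (fun _ => 0).

Definition extI (I : finterp L U) : finterp EL U :=
  fun f => match f return (farity EL f).-tuple U -> U with
           | inl f0 => I f0 | inr e => fun _ => e end.

(* the ground facts p(c_e1,..,c_en) for the atoms of S *)
Definition factTh (S : atoms L U) : theory EL :=
  fun phi => exists p (t : (parity L p).-tuple U), S (existT _ p t) /\
    phi = @Atom EL (inl p) (fun i => @App EL (inr (tnth t i)) (fun _ => Var _ 0)).

Lemma factTh_factual (S : atoms L U) : factual_theory (factTh S).
Proof. by move=> phi [p [t [_ ->]]]; split => // i /= [j hj]. Qed.

Lemma hsat_factTh (u : U) (I : finterp L U) (J K : atoms EL U) (S : atoms L U) :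
  hsat_th (extI I) J K (factTh S) <-> subset_at S (resA J).
Proof.
have tupleE p (t : (parity L p).-tuple U) : [tuple tnth t i | i < parity L p] = t.
  by apply: eq_from_tnth => i; rewrite tnth_mktuple.
split=> [H [p t] St | H phi [p [t [St ->]]] env].
  by have := H _ (ex_intro _ p (ex_intro _ t (conj St erefl))) (fun _ => u);
     rewrite /= /ground_atom /= tupleE.
by rewrite /= /ground_atom /= tupleE; apply: (H (existT _ p t)).
Qed.

Lemma there_closed_answer_set (G : theory L) (u : U) (I : finterp L U) (J K : atoms L U) :
  subset_at J K ->
  there_closed (Cs G (U:=U)) I J K <->
  answer_set (extI I) (liftA K : atoms EL U)
    (union_th (emb_theory G) (factTh J)).
Proof.
move=> sJK; rewrite answer_set_emb_union; last exact: factTh_factual.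
rewrite !resA_liftA; split=> [tc | [HK _ Hsmall]].
  split.
  - by apply/there_closed_refl; apply: there_closed_mono sJK tc.
  - by apply/(hsat_factTh u); rewrite resA_liftA.
  - move=> J'' st /(hsat_factTh u) sJJ''.
    by split; [apply: strict_resA_liftA | apply: there_closed_mono tc].
case: (subset_atE sJK) => [-> | stJK]; first exact/there_closed_refl.
have HJ : hsat_th (extI I) (liftA J) (liftA K) (factTh J).
  by apply/(hsat_factTh u); rewrite resA_liftA.
by have [_] := Hsmall _ (liftA_strict _ _ stJK) HJ; rewrite resA_liftA.
Qed.

End Constants.

Lemma answer_set_transfer (L : sig) (G1 G2 : theory L)
    (H12 : forall U, inhabited U -> forall (I : finterp L U) (J K : atoms L U),
       subset_at J K ->
       there_closed (Cs G1 (U:=U)) I J K -> there_closed (Cs G2 (U:=U)) I J K)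
    EF EP (ea : EF -> nat) (ep : EP -> nat) (G : theory (ext L ea ep)) U
    (I : finterp (ext L ea ep) U) K :
  factual_theory G -> inhabited U ->
  answer_set I K (union_th (emb_theory G1) G) ->
  answer_set I K (union_th (emb_theory G2) G).
Proof.
move=> fG inhU; rewrite !answer_set_emb_union //.
case=> /there_closed_refl HK1 HKG Hsmall; split=> //.
  by apply/there_closed_refl; apply: H12 HK1.
move=> J st HJG; have [stL tc] := Hsmall J st HJG.
by split=> //; apply: H12 tc => //; apply: resA_subset st.1.
Qed.

Theorem mainTheorem15 (L : sig) (G1 G2 : theory L) :
  is_theory G1 -> is_theory G2 ->
  unif_equiv G1 G2 <->
  (forall (U : Type), inhabited U ->
   forall (I : finterp L U) (J K : atoms L U), subset_at J K ->
     (there_closed (Cs G1 (U:=U)) I J K <-> there_closed (Cs G2 (U:=U)) I J K)).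
Proof.
move=> _ _; split=> [UE U [u] I J K sJK | H EF EP ea ep G fG U inhU I K].
  rewrite !(there_closed_answer_set _ u I sJK).
  by apply: (UE _ _ _ _ (factTh J) (@factTh_factual L U J) U (inhabits u)).
by split; apply: (answer_set_transfer _ fG inhU) => U' inhU' I' J K' sJK /(H U' inhU' I' J K' sJK).
Qed.
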